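(* Let $\mathrm X$ be the Cantor set, let $\mathrm U,\mathrm V\subseteq\mathrm X$ be open with $\mathrm U\neq\mathrm X$, and let $h:\mathrm U\to\mathrm V$ be a homeomorphism. For $n\in\mathbb Z$ let $\mathrm X_{-n}=\mathrm{dom}(h^n)$ and $h_n=h^n:\mathrm X_{-n}\to\mathrm X_n$, and let $R=\{(r,x,s,y)\in\mathbb Z\times\mathrm X\times\mathbb Z\times\mathrm X: x\in\mathrm X_{s-r},\ h^{r-s}(x)=y\}$. Let $(\mathrm U_k)_{k\ge0}$ be an increasing sequence of clopen subsets of $\mathrm X$ with $\bigcup_k\mathrm U_k=\mathrm U$. For each $k$, let $g_k=h|_{\mathrm U_k}:\mathrm U_k\to h(\mathrm U_k)$, $\mathrm X^k_{-n}=\mathrm{dom}(g_k^n)$, and $R_k=\{(r,x,s,y)\in\mathbb Z\times\mathrm X\times\mathbb Z\times\mathrm X: x\in\mathrm X^k_{s-r},\ h^{r-s}(x)=y\}$. Then each $R_k$ is an equivalence relation on $\mathbb Z\times\mathrm X$ whose quotient space is Hausdorff (i.e. $R_k$ is proper), $R_k\subseteq R_{k+1}$ for all $k$, and $R=\bigcup_{k}R_k$. In particular $R$ is approximately proper.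
   Context: Here $\mathrm{dom}(h^n)$ denotes the domain of the $n$-fold composition of the partial bijection $h$ (for $n<0$, of $(h^{-1})^{|n|}$; $\mathrm{dom}(h^0)=\mathrm X$). These data define partial actions of $\mathbb Z$ on $\mathrm X$. An equivalence relation on a locally compact, second countable, Hausdorff space is proper if its quotient space is Hausdorff, and approximately proper if it is the union of an increasing sequence of proper equivalence relations. *)

(* The Cantor set is modelled as nat -> bool (= {0,1}^N)
   with the product topology, described via cylinder neighbourhoods. *)
From Stdlib Require Import ZArith PArith.

Definition Cantor := nat -> bool.

Definition agree (n : nat) (x y : Cantor) : Prop := forall i, i < n -> x i = y i.

Definition is_open (A : Cantor -> Prop) : Prop :=
  forall x, A x -> exists n, forall y, agree n x y -> A y.

Definition is_closed (A : Cantor -> Prop) : Prop := is_open (fun x => ~ A x).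

Definition is_clopen (A : Cantor -> Prop) : Prop := is_open A /\ is_closed A.

Definition continuous_on (D : Cantor -> Prop) (f : Cantor -> Cantor) : Prop :=
  forall x, D x -> forall n, exists m, forall y, D y -> agree m x y -> agree n (f x) (f y).

Definition homeo_between (U V : Cantor -> Prop) (h hinv : Cantor -> Cantor) : Prop :=
  (forall x, U x -> V (h x)) /\ (forall y, V y -> U (hinv y)) /\
  (forall x, U x -> hinv (h x) = x) /\ (forall y, V y -> h (hinv y) = y) /\
  continuous_on U h /\ continuous_on V hinv.

Fixpoint iter_dom (D : Cantor -> Prop) (f : Cantor -> Cantor) (n : nat) (x : Cantor) : Prop :=
  match n with
  | O => True
  | S m => D x /\ iter_dom D f m (f x)
  end.

(* dom(g^z) for z : Z, where g is a partial bijection with domain D, map f,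
   range Dinv and inverse finv *)
Definition zdom (D : Cantor -> Prop) (f : Cantor -> Cantor)
    (Dinv : Cantor -> Prop) (finv : Cantor -> Cantor) (z : Z) : Cantor -> Prop :=
  match z with
  | Z0 => fun _ => True
  | Zpos p => iter_dom D f (Pos.to_nat p)
  | Zneg p => iter_dom Dinv finv (Pos.to_nat p)
  end.

(* the map g^z (only meaningful on zdom ... z) *)
Definition zpow (f finv : Cantor -> Cantor) (z : Z) (x : Cantor) : Cantor :=
  match z with
  | Z0 => x
  | Zpos p => Nat.iter (Pos.to_nat p) f x
  | Zneg p => Nat.iter (Pos.to_nat p) finv x
  end.

Definition ZX := (Z * Cantor)%type.

Definition is_equiv (R : ZX -> ZX -> Prop) : Prop :=
  (forall p, R p p) /\ (forall p q, R p q -> R q p) /\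
  (forall p q t, R p q -> R q t -> R p t).

Definition is_openZX (A : ZX -> Prop) : Prop :=
  forall r x, A (r, x) -> exists n, forall y, agree n x y -> A (r, y).

Definition saturated (R : ZX -> ZX -> Prop) (A : ZX -> Prop) : Prop :=
  forall p q, R p q -> A p -> A q.

(* Open sets of the quotient are exactly the images of saturated open sets,
   so this unfolds to: distinct classes are separated by disjoint saturated
   open sets. *)
Definition quotient_hausdorff (R : ZX -> ZX -> Prop) : Prop :=
  forall p q, ~ R p q ->
    exists A B : ZX -> Prop,
      is_openZX A /\ is_openZX B /\ saturated R A /\ saturated R B /\
      A p /\ B q /\ (forall t, A t -> B t -> False).

Definition proper_rel (R : ZX -> ZX -> Prop) : Prop :=
  is_equiv R /\ quotient_hausdorff R.

Definition approx_proper (R : ZX -> ZX -> Prop) : Prop :=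
  exists Rs : nat -> ZX -> ZX -> Prop,
    (forall k, proper_rel (Rs k)) /\
    (forall k p q, Rs k p q -> Rs (S k) p q) /\
    (forall p q, R p q <-> exists k, Rs k p q).

Definition relR (U V : Cantor -> Prop) (h hinv : Cantor -> Cantor) (p q : ZX) : Prop :=
  zdom U h V hinv (fst p - fst q)%Z (snd p) /\
  zpow h hinv (fst p - fst q)%Z (snd p) = snd q.

Definition image (h : Cantor -> Cantor) (W : Cantor -> Prop) : Cantor -> Prop :=
  fun y => exists x, W x /\ h x = y.

(* R_k, using g_k = h|_{W} : W -> h(W) with W = U_k *)
Definition relRk (W : Cantor -> Prop) (h hinv : Cantor -> Cantor) (p q : ZX) : Prop :=
  zdom W h (image h W) hinv (fst p - fst q)%Z (snd p) /\
  zpow h hinv (fst p - fst q)%Z (snd p) = snd q.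

From Stdlib Require Import ZArith Lia Classical FunctionalExtensionality.

(* For a partial bijection f : D -> E with inverse g : E -> D, write
   x ~c~> y (the "Z-graph" of f) when x lies in dom(f^c) and f^c x = y, and
   let (r,x) ~ (s,y) be the "orbit relation" x ~(r-s)~> y on Z x X.  Both R
   and every R_k are orbit relations: R for h : U -> V, and R_k for the
   restriction g_k = h|U_k : U_k -> h(U_k).  The theorem then follows from
   general facts about orbit relations:
   1. the Z-graph obeys the group laws (x ~c~> y gives y ~(-c)~> x, and
      composable arrows compose), so the orbit relation is an equivalence;
   2. when D, E are open and f, g continuous, the orbit relation is open
      (saturations of open sets are open); when moreover D is closed its
      graph is closed; an open equivalence with closed graph has a Hausdorff
      quotient — hence each R_k (U_k clopen) is proper;
   3. the orbit relation is monotone in (D, E), and every point of dom(h^n)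
      already lies in dom(g_k^n) for some k, so R is the increasing union of
      the R_k. *)

Lemma iter_dom_add D f m n x :
  iter_dom D f (m + n) x <-> iter_dom D f m x /\ iter_dom D f n (Nat.iter m f x).
Proof.
  revert x; induction m as [|m IH]; intro x; cbn [iter_dom Nat.add].
  - simpl; tauto.
  - rewrite Nat.iter_succ_r, IH; tauto.
Qed.

Lemma iter_dom_mono (D D' : Cantor -> Prop) f :
  (forall x, D x -> D' x) -> forall n x, iter_dom D f n x -> iter_dom D' f n x.
Proof. intros HDD' n; induction n; intros x Hx; simpl in *; [auto | destruct Hx; auto]. Qed.

Definition partial_bijection (D : Cantor -> Prop) (f : Cantor -> Cantor)
    (E : Cantor -> Prop) (g : Cantor -> Cantor) : Prop :=
  (forall x, D x -> E (f x)) /\ (forall y, E y -> D (g y)) /\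
  (forall x, D x -> g (f x) = x) /\ (forall y, E y -> f (g y) = y).

Lemma partial_bijection_swap D f E g :
  partial_bijection D f E g -> partial_bijection E g D f.
Proof. unfold partial_bijection; tauto. Qed.

Section PartialBijection.
Variables (D E : Cantor -> Prop) (f g : Cantor -> Cantor).
Hypothesis Hbij : partial_bijection D f E g.

Lemma iter_inverse n x :
  iter_dom D f n x -> iter_dom E g n (Nat.iter n f x) /\ Nat.iter n g (Nat.iter n f x) = x.
Proof.
  destruct Hbij as [HDE [_ [Hgf _]]].
  revert x; induction n as [|n IH]; intros x Hx; [simpl; auto|].
  destruct Hx as [Dx Hx]. destruct (IH _ Hx) as [Hdom Hinv].
  rewrite Nat.iter_succ_r, Nat.iter_succ, Hinv.
  split; [|auto].
  replace (S n) with (n + 1) by lia. apply iter_dom_add.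
  rewrite Hinv. simpl; auto.
Qed.

Lemma iter_cancel_le m n x :
  iter_dom D f m x -> n <= m ->
  iter_dom D f (m - n) x /\ Nat.iter n g (Nat.iter m f x) = Nat.iter (m - n) f x.
Proof.
  intros Hx Hnm.
  replace m with ((m - n) + n) in Hx by lia. apply iter_dom_add in Hx as [Hx1 Hx2].
  replace m with (n + (m - n)) by lia. rewrite Nat.iter_add, Nat.add_comm, Nat.add_sub.
  split; [exact Hx1|]. apply (iter_inverse _ _ Hx2).
Qed.

Lemma iter_cancel_ge m n x :
  iter_dom D f m x -> iter_dom E g n (Nat.iter m f x) -> m <= n ->
  iter_dom E g (n - m) x /\ Nat.iter n g (Nat.iter m f x) = Nat.iter (n - m) g x.
Proof.
  intros Hx Hy Hmn. destruct (iter_inverse _ _ Hx) as [_ Hback].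
  replace n with (m + (n - m)) in Hy |- * by lia.
  apply iter_dom_add in Hy as [_ Hy]. rewrite Hback in Hy.
  rewrite Nat.add_comm, Nat.iter_add, Hback, Nat.add_sub. auto.
Qed.
End PartialBijection.

Definition zgraph (D : Cantor -> Prop) (f : Cantor -> Cantor)
    (E : Cantor -> Prop) (g : Cantor -> Cantor) (c : Z) (x y : Cantor) : Prop :=
  zdom D f E g c x /\ zpow f g c x = y.

Lemma Z_nat_cases (c : Z) : exists m, c = Z.of_nat m \/ c = (- Z.of_nat m)%Z.
Proof.
  exists (Z.abs_nat c). destruct (Z.le_ge_cases 0 c); [left | right]; lia.
Qed.

Lemma zgraph_of_nat D f E g m x y :
  zgraph D f E g (Z.of_nat m) x y <-> iter_dom D f m x /\ Nat.iter m f x = y.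
Proof.
  destruct m; [unfold zgraph; simpl; tauto|].
  unfold zgraph, zdom, zpow, Z.of_nat. rewrite SuccNat2Pos.id_succ. reflexivity.
Qed.

Lemma zgraph_opp D f E g c x y :
  zgraph D f E g (- c) x y <-> zgraph E g D f c x y.
Proof. destruct c; reflexivity. Qed.

Lemma zgraph_opp_of_nat D f E g m x y :
  zgraph D f E g (- Z.of_nat m) x y <-> iter_dom E g m x /\ Nat.iter m g x = y.
Proof. rewrite zgraph_opp. apply zgraph_of_nat. Qed.

Lemma zgraph_add_of_nat D f E g m n x y z :
  zgraph D f E g (Z.of_nat m) x y -> zgraph D f E g (Z.of_nat n) y z ->
  zgraph D f E g (Z.of_nat m + Z.of_nat n) x z.
Proof.
  rewrite <- Nat2Z.inj_add, !zgraph_of_nat, iter_dom_add, Nat.add_comm, Nat.iter_add.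
  intros [Hx <-] [Hy <-]. auto.
Qed.

Lemma zgraph_cancel D f E g m n x y z : partial_bijection D f E g ->
  zgraph D f E g (Z.of_nat m) x y -> zgraph D f E g (- Z.of_nat n) y z ->
  zgraph D f E g (Z.of_nat m + - Z.of_nat n) x z.
Proof.
  intros Hbij. rewrite zgraph_of_nat, zgraph_opp_of_nat. intros [Hx <-] [Hy <-].
  destruct (Nat.le_ge_cases n m) as [Hnm | Hmn].
  - replace (Z.of_nat m + - Z.of_nat n)%Z with (Z.of_nat (m - n)) by lia.
    apply zgraph_of_nat.
    destruct (iter_cancel_le _ _ _ _ Hbij m n x Hx Hnm) as [Hdom ->]; auto.
  - replace (Z.of_nat m + - Z.of_nat n)%Z with (- Z.of_nat (n - m))%Z by lia.
    apply zgraph_opp_of_nat.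
    destruct (iter_cancel_ge _ _ _ _ Hbij m n x Hx Hy Hmn) as [Hdom ->]; auto.
Qed.

Lemma zgraph_sym_of_nat D f E g m x y : partial_bijection D f E g ->
  zgraph D f E g (Z.of_nat m) x y -> zgraph D f E g (- Z.of_nat m) y x.
Proof.
  intros Hbij. rewrite zgraph_of_nat, zgraph_opp_of_nat.
  intros [Hx <-]. apply (iter_inverse _ _ _ _ Hbij), Hx.
Qed.

Lemma zgraph_sym D f E g c x y : partial_bijection D f E g ->
  zgraph D f E g c x y -> zgraph D f E g (- c) y x.
Proof.
  intros Hbij. destruct (Z_nat_cases c) as [m [-> | ->]]; [now apply zgraph_sym_of_nat|].
  intros Hxy. rewrite zgraph_opp in Hxy. rewrite zgraph_opp.
  exact (zgraph_sym_of_nat _ _ _ _ _ _ _ (partial_bijection_swap _ _ _ _ Hbij) Hxy).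
Qed.

Lemma zgraph_add D f E g c c' x y z : partial_bijection D f E g ->
  zgraph D f E g c x y -> zgraph D f E g c' y z -> zgraph D f E g (c + c') x z.
Proof.
  intros Hbij. pose proof (partial_bijection_swap _ _ _ _ Hbij) as Hbij_swap.
  destruct (Z_nat_cases c) as [m [-> | ->]], (Z_nat_cases c') as [n [-> | ->]];
    intros Hxy Hyz.
  - now apply zgraph_add_of_nat with y.
  - now apply zgraph_cancel with y.
  - replace (- Z.of_nat m + Z.of_nat n)%Z with (- (Z.of_nat m + - Z.of_nat n))%Z by lia.
    rewrite zgraph_opp in Hxy |- *. rewrite <- (zgraph_opp E g D f) in Hyz.
    exact (zgraph_cancel _ _ _ _ _ _ _ _ _ Hbij_swap Hxy Hyz).
  - replace (- Z.of_nat m + - Z.of_nat n)%Z with (- (Z.of_nat m + Z.of_nat n))%Z by lia.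
    rewrite zgraph_opp in Hxy, Hyz |- *. now apply zgraph_add_of_nat with y.
Qed.

Definition orbit_rel (D : Cantor -> Prop) (f : Cantor -> Cantor)
    (E : Cantor -> Prop) (g : Cantor -> Cantor) (p q : ZX) : Prop :=
  zgraph D f E g (fst p - fst q) (snd p) (snd q).

(* Reflexivity, symmetry and transitivity are the group laws of the Z-graph. *)
Lemma orbit_rel_equiv D f E g : partial_bijection D f E g -> is_equiv (orbit_rel D f E g).
Proof.
  intros Hbij. unfold orbit_rel. split; [|split].
  - intros [r x]; simpl. rewrite Z.sub_diag. split; reflexivity.
  - intros [r x] [s y] Hxy; simpl in *.
    replace (s - r)%Z with (- (r - s))%Z by lia. now apply zgraph_sym.
  - intros [r x] [s y] [u z] Hxy Hyz; simpl in *.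
    replace (r - u)%Z with ((r - s) + (s - u))%Z by lia. now apply zgraph_add with y.
Qed.

Lemma agree_mono n m x y : m <= n -> agree n x y -> agree m x y.
Proof. intros Hmn Hxy i Hi. apply Hxy. lia. Qed.

Lemma agree_trans n x y z : agree n x y -> agree n y z -> agree n x z.
Proof. intros Hxy Hyz i Hi. rewrite Hxy, Hyz; auto. Qed.

Lemma agree_refl n x : agree n x x.
Proof. intros i _. reflexivity. Qed.

Lemma continuous_on_mono (D D' : Cantor -> Prop) f :
  (forall x, D' x -> D x) -> continuous_on D f -> continuous_on D' f.
Proof.
  intros HD'D Hf x Hx n. destruct (Hf x (HD'D x Hx) n) as [m Hm].
  exists m. intros y Hy. apply Hm, HD'D, Hy.
Qed.

Section IterationTopology.
Variables (D : Cantor -> Prop) (f : Cantor -> Cantor).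
Hypotheses (HD : is_open D) (Hf : continuous_on D f).

Lemma iter_dom_open_continuous n :
  is_open (iter_dom D f n) /\ continuous_on (iter_dom D f n) (Nat.iter n f).
Proof.
  induction n as [|n [Hopen Hcont]].
  - split; [intros x _; exists 0; intros; exact I | intros x _ N; exists N; auto].
  - split.
    + intros x [Dx Hx]. destruct (Hopen _ Hx) as [m1 Hm1], (Hf x Dx m1) as [m2 Hm2],
        (HD x Dx) as [m3 Hm3].
      exists (Nat.max m2 m3). intros y Hy.
      assert (Dy : D y) by (apply Hm3; eapply agree_mono; [apply Nat.le_max_r | exact Hy]).
      split; [exact Dy|]. apply Hm1, Hm2; auto.
      eapply agree_mono; [apply Nat.le_max_l | exact Hy].
    + intros x [Dx Hx] N. destruct (Hcont _ Hx N) as [m1 Hm1], (Hf x Dx m1) as [m2 Hm2].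
      exists m2. intros y [Dy Hy] Hxy. rewrite !Nat.iter_succ_r. auto.
Qed.

Hypothesis HDc : is_closed D.

Lemma iter_dom_closed n : is_closed (iter_dom D f n).
Proof.
  induction n as [|n IH]; intros x Hx.
  - exfalso. apply Hx. exact I.
  - destruct (classic (D x)) as [Dx | nDx].
    + assert (Hfx : ~ iter_dom D f n (f x)) by (intro; apply Hx; split; auto).
      destruct (IH _ Hfx) as [m1 Hm1], (Hf x Dx m1) as [m2 Hm2], (HD x Dx) as [m3 Hm3].
      exists (Nat.max m2 m3). intros y Hy [Dy Hfy].
      apply (Hm1 (f y)); auto. apply Hm2; auto.
      eapply agree_mono; [apply Nat.le_max_l | exact Hy].
    + destruct (HDc x nDx) as [m Hm]. exists m. intros y Hy [Dy _]. exact (Hm y Hy Dy).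
Qed.

Lemma iter_graph_closed m x y : ~ (iter_dom D f m x /\ Nat.iter m f x = y) ->
  exists N, forall x' y', agree N x x' -> agree N y y' ->
    ~ (iter_dom D f m x' /\ Nat.iter m f x' = y').
Proof.
  intros Hxy. destruct (classic (iter_dom D f m x)) as [Hx | Hx].
  - assert (Hne : exists i, Nat.iter m f x i <> y i).
    { apply not_all_ex_not. intro Hall. apply Hxy. split; [exact Hx|].
      apply functional_extensionality, Hall. }
    destruct Hne as [i Hi].
    destruct (proj2 (iter_dom_open_continuous m) x Hx (S i)) as [M HM].
    exists (Nat.max M (S i)). intros x' y' Hx' Hy' [Hdom' <-]. apply Hi.
    rewrite (HM x' Hdom' (agree_mono _ _ _ _ (Nat.le_max_l _ _) Hx') i (Nat.lt_succ_diag_r i)).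
    symmetry. apply Hy'. lia.
  - destruct (iter_dom_closed m x Hx) as [N HN]. exists N.
    intros x' y' Hx' _ [Hdom' _]. exact (HN x' Hx' Hdom').
Qed.
End IterationTopology.

Lemma zdom_open_continuous D f E g c :
  is_open D -> continuous_on D f -> is_open E -> continuous_on E g ->
  is_open (zdom D f E g c) /\ continuous_on (zdom D f E g c) (zpow f g c).
Proof.
  intros HD Hf HE Hg. destruct c as [|p|p]; simpl.
  - apply (iter_dom_open_continuous D f HD Hf 0).
  - apply iter_dom_open_continuous; auto.
  - apply iter_dom_open_continuous; auto.
Qed.

Definition saturation (R : ZX -> ZX -> Prop) (A : ZX -> Prop) : ZX -> Prop :=
  fun t => exists a, A a /\ R a t.

Definition cylinder (r : Z) (x : Cantor) (N : nat) : ZX -> Prop :=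
  fun t => fst t = r /\ agree N x (snd t).

Definition open_relation (R : ZX -> ZX -> Prop) : Prop :=
  forall A, is_openZX A -> is_openZX (saturation R A).

Definition closed_graph (R : ZX -> ZX -> Prop) : Prop :=
  forall r x s y, ~ R (r, x) (s, y) ->
    exists N, forall x' y', agree N x x' -> agree N y y' -> ~ R (r, x') (s, y').

Lemma cylinder_open r x N : is_openZX (cylinder r x N).
Proof.
  intros s x' [Hs Hx']. exists N. intros y Hy. split; [exact Hs|].
  eapply agree_trans; eauto.
Qed.

Lemma saturation_saturated R A :
  (forall p q t, R p q -> R q t -> R p t) -> saturated R (saturation R A).
Proof. intros Htrans p q Hpq [a [Ha Hap]]. exists a. eauto. Qed.

(* An open equivalence relation with closed graph has a Hausdorff quotient:
   separate two classes by the saturations of small cylinders around them. *)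
Lemma hausdorff_of_open_closed_graph R :
  is_equiv R -> open_relation R -> closed_graph R -> quotient_hausdorff R.
Proof.
  intros [Hrefl [Hsym Htrans]] Hopen Hclosed [r x] [s y] Hxy.
  destruct (Hclosed r x s y Hxy) as [N HN].
  exists (saturation R (cylinder r x N)), (saturation R (cylinder s y N)).
  split; [apply Hopen, cylinder_open|]. split; [apply Hopen, cylinder_open|].
  split; [apply saturation_saturated, Htrans|].
  split; [apply saturation_saturated, Htrans|].
  split; [exists (r, x); split; [split; [reflexivity | apply agree_refl] | apply Hrefl]|].
  split; [exists (s, y); split; [split; [reflexivity | apply agree_refl] | apply Hrefl]|].
  intros t [[r' x'] [[Hr Hx'] Hat]] [[s' y'] [[Hs Hy'] Hbt]]; simpl in *; subst r' s'.
  apply (HN x' y' Hx' Hy'). eauto.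
Qed.

Section OrbitTopology.
Variables (D E : Cantor -> Prop) (f g : Cantor -> Cantor).
Hypotheses (Hbij : partial_bijection D f E g)
  (HD : is_open D) (Hf : continuous_on D f) (HE : is_open E) (Hg : continuous_on E g).

(* The orbit relation of a partial homeomorphism with open domain and range
   is open: near (u,z) ~ (r,x) every (u,z') is related to a point near (r,x). *)
Lemma orbit_rel_open : open_relation (orbit_rel D f E g).
Proof.
  destruct (orbit_rel_equiv _ _ _ _ Hbij) as [_ [Hsym _]].
  intros A HA u z [[r x] [Ha Hat]].
  apply Hsym in Hat. destruct Hat as [Hz Hzx]; simpl in *.
  destruct (HA r x Ha) as [N HN].
  destruct (zdom_open_continuous D f E g (u - r) HD Hf HE Hg) as [Hopen Hcont].
  destruct (Hopen z Hz) as [n1 Hn1], (Hcont z Hz N) as [n2 Hn2].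
  exists (Nat.max n1 n2). intros z' Hz'.
  assert (Hz'dom : zdom D f E g (u - r) z')
    by (apply Hn1; eapply agree_mono; [apply Nat.le_max_l | exact Hz']).
  exists (r, zpow f g (u - r) z'). split.
  - apply HN. rewrite <- Hzx. apply Hn2; auto.
    eapply agree_mono; [apply Nat.le_max_r | exact Hz'].
  - apply Hsym. split; auto.
Qed.

Hypothesis HDc : is_closed D.

(* With D clopen the orbit relation has closed graph; by symmetry it suffices
   to treat non-negative exponents, i.e. iter_graph_closed. *)
Lemma orbit_rel_closed_graph : closed_graph (orbit_rel D f E g).
Proof.
  assert (Hforward : forall r x s y m, (r - s)%Z = Z.of_nat m ->
      ~ orbit_rel D f E g (r, x) (s, y) -> exists N, forall x' y',
      agree N x x' -> agree N y y' -> ~ orbit_rel D f E g (r, x') (s, y')).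
  { intros r x s y m Hm. unfold orbit_rel; simpl. rewrite Hm, zgraph_of_nat.
    intros Hxy. destruct (iter_graph_closed D f HD Hf HDc m x y Hxy) as [N HN].
    exists N. intros x' y' Hx' Hy'. rewrite zgraph_of_nat. auto. }
  destruct (orbit_rel_equiv _ _ _ _ Hbij) as [_ [Hsym _]].
  intros r x s y Hxy. destruct (Z_nat_cases (r - s)) as [m [Hm | Hm]]; [eauto|].
  assert (Hyx : ~ orbit_rel D f E g (s, y) (r, x))
    by (intro; apply Hxy, Hsym; assumption).
  destruct (Hforward s y r x m ltac:(lia) Hyx) as [N HN].
  exists N. intros x' y' Hx' Hy' Hxy'. apply (HN y' x' Hy' Hx').
  apply Hsym, Hxy'.
Qed.

Lemma orbit_rel_proper : proper_rel (orbit_rel D f E g).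
Proof.
  split; [apply orbit_rel_equiv, Hbij|].
  apply hausdorff_of_open_closed_graph;
    [apply orbit_rel_equiv, Hbij | apply orbit_rel_open | apply orbit_rel_closed_graph].
Qed.
End OrbitTopology.

Section Restriction.
Variables (U V W : Cantor -> Prop) (h hinv : Cantor -> Cantor).
Hypotheses (Hhomeo : homeo_between U V h hinv) (HWU : forall x, W x -> U x).

Lemma restriction_bijection : partial_bijection W h (image h W) hinv.
Proof.
  destruct Hhomeo as [_ [_ [Hinv_h _]]].
  split; [|split; [|split]].
  - intros x Hx. exists x. auto.
  - intros y [x [Hx <-]]. rewrite Hinv_h; auto.
  - intros x Hx. auto.
  - intros y [x [Hx <-]]. rewrite Hinv_h; auto.
Qed.

Lemma restriction_image_in_range y : image h W y -> V y.
Proof. destruct Hhomeo as [HUV _]. intros [x [Hx <-]]. auto. Qed.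

(* h maps open subsets of U to open sets, since hinv is continuous on open V. *)
Lemma restriction_image_open : is_open V -> is_open W -> is_open (image h W).
Proof.
  destruct Hhomeo as [HUV [HVU [Hinv_h [Hh_inv [_ Hcont_inv]]]]].
  intros HV HW y [x [Hx <-]].
  destruct (HV (h x) (HUV x (HWU x Hx))) as [a Ha], (HW x Hx) as [b Hb].
  destruct (Hcont_inv (h x) (HUV x (HWU x Hx)) b) as [m Hm].
  exists (Nat.max a m). intros y Hy.
  assert (Vy : V y) by (apply Ha; eapply agree_mono; [apply Nat.le_max_l | exact Hy]).
  exists (hinv y). split; [|auto].
  apply Hb. rewrite <- (Hinv_h x (HWU x Hx)). apply Hm; auto.
  eapply agree_mono; [apply Nat.le_max_r | exact Hy].
Qed.

Lemma restricted_orbit_rel_proper :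
  is_open V -> is_clopen W -> proper_rel (relRk W h hinv).
Proof.
  destruct Hhomeo as [_ [_ [_ [_ [Hcont Hcont_inv]]]]].
  intros HV [HW HWc]. apply orbit_rel_proper; auto.
  - apply restriction_bijection.
  - apply continuous_on_mono with U; auto.
  - apply restriction_image_open; auto.
  - apply continuous_on_mono with V; auto. apply restriction_image_in_range.
Qed.
End Restriction.

Lemma increasing_le (Dk : nat -> Cantor -> Prop) :
  (forall k x, Dk k x -> Dk (S k) x) -> forall k k' x, k <= k' -> Dk k x -> Dk k' x.
Proof. intros Hincr k k' x Hle; induction Hle; auto. Qed.

(* If D is the increasing union of the D_k, every point of dom(f^m) lies in
   dom((f|D_k)^m) for some k (only m points need to be covered). *)
Lemma iter_dom_exhaust (D : Cantor -> Prop) (Dk : nat -> Cantor -> Prop) f :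
  (forall k x, Dk k x -> Dk (S k) x) -> (forall x, D x -> exists k, Dk k x) ->
  forall m x, iter_dom D f m x -> exists k, iter_dom (Dk k) f m x.
Proof.
  intros Hincr Hcover m; induction m as [|m IH]; intros x Hx.
  - exists 0. exact I.
  - destruct Hx as [Dx Hx]. destruct (IH _ Hx) as [k1 Hk1], (Hcover x Dx) as [k2 Hk2].
    exists (Nat.max k1 k2). split.
    + apply increasing_le with k2; auto. apply Nat.le_max_r.
    + apply iter_dom_mono with (Dk k1); auto.
      intros y. apply increasing_le; auto. apply Nat.le_max_l.
Qed.

Lemma orbit_rel_mono (D D' E E' : Cantor -> Prop) f g p q :
  (forall x, D x -> D' x) -> (forall x, E x -> E' x) ->
  orbit_rel D f E g p q -> orbit_rel D' f E' g p q.
Proof.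
  intros HDD' HEE' [Hdom Hval]. split; [|exact Hval].
  destruct (fst p - fst q)%Z; simpl in *; eauto using iter_dom_mono.
Qed.

Lemma orbit_rel_exhaust (D E : Cantor -> Prop) (Dk Ek : nat -> Cantor -> Prop) f g p q :
  (forall k x, Dk k x -> Dk (S k) x) -> (forall x, D x -> exists k, Dk k x) ->
  (forall k x, Ek k x -> Ek (S k) x) -> (forall x, E x -> exists k, Ek k x) ->
  orbit_rel D f E g p q -> exists k, orbit_rel (Dk k) f (Ek k) g p q.
Proof.
  intros HDincr HDcover HEincr HEcover [Hdom Hval]. unfold orbit_rel, zgraph.
  destruct (fst p - fst q)%Z; simpl in *.
  - exists 0. auto.
  - destruct (iter_dom_exhaust D Dk f HDincr HDcover _ _ Hdom) as [k Hk]. eauto.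
  - destruct (iter_dom_exhaust E Ek g HEincr HEcover _ _ Hdom) as [k Hk]. eauto.
Qed.

Lemma relRk_mono (W W' : Cantor -> Prop) h hinv p q :
  (forall x, W x -> W' x) -> relRk W h hinv p q -> relRk W' h hinv p q.
Proof.
  intros HWW'. apply orbit_rel_mono; [exact HWW'|].
  intros y [x [Hx <-]]. exists x. auto.
Qed.

(* If U is the increasing union of the U_k, then R is the union of the R_(U_k):
   the images h(U_k) exhaust V because h(hinv y) = y on V. *)
Lemma relR_exhaust (U V : Cantor -> Prop) h hinv (Uk : nat -> Cantor -> Prop) :
  homeo_between U V h hinv -> (forall k x, Uk k x -> Uk (S k) x) ->
  (forall x, U x <-> exists k, Uk k x) ->
  forall p q, relR U V h hinv p q <-> exists k, relRk (Uk k) h hinv p q.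
Proof.
  intros Hhomeo Hincr Hunion p q.
  assert (HUk_sub : forall k x, Uk k x -> U x) by (intros k x Hx; apply Hunion; eauto).
  pose proof Hhomeo as [_ [HVU [_ [Hh_inv _]]]].
  split.
  - apply orbit_rel_exhaust; auto.
    + intros x Hx; apply Hunion, Hx.
    + intros k y [x [Hx <-]]. exists x. auto.
    + intros y Vy. destruct (proj1 (Hunion (hinv y)) (HVU y Vy)) as [k Hk].
      exists k, (hinv y). auto.
  - intros [k Hk]. revert Hk. apply orbit_rel_mono; [exact (HUk_sub k)|].
    exact (restriction_image_in_range U V (Uk k) h hinv Hhomeo (HUk_sub k)).
Qed.

Theorem mainTheorem8
  (U V : Cantor -> Prop) (h hinv : Cantor -> Cantor)
  (hU : is_open U) (hV : is_open V) (hUX : exists x, ~ U x)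
  (hh : homeo_between U V h hinv)
  (Uk : nat -> Cantor -> Prop)
  (hUk_clopen : forall k, is_clopen (Uk k))
  (hUk_incr : forall k x, Uk k x -> Uk (S k) x)
  (hUk_union : forall x, U x <-> exists k, Uk k x) :
  (forall k, proper_rel (relRk (Uk k) h hinv)) /\
  (forall k p q, relRk (Uk k) h hinv p q -> relRk (Uk (S k)) h hinv p q) /\
  (forall p q, relR U V h hinv p q <-> exists k, relRk (Uk k) h hinv p q) /\
  approx_proper (relR U V h hinv).
Proof.
  assert (HUk_sub : forall k x, Uk k x -> U x) by (intros k x Hx; apply hUk_union; eauto).
  assert (Hproper : forall k, proper_rel (relRk (Uk k) h hinv)).
  { intro k. apply (restricted_orbit_rel_proper U V (Uk k) h hinv hh (HUk_sub k) hV),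
      hUk_clopen. }
  assert (Hincr : forall k p q, relRk (Uk k) h hinv p q -> relRk (Uk (S k)) h hinv p q)
    by (intros k p q; apply relRk_mono, hUk_incr).
  pose proof (relR_exhaust U V h hinv Uk hh hUk_incr hUk_union) as Hunion.
  split; [exact Hproper|]. split; [exact Hincr|]. split; [exact Hunion|].
  exists (fun k => relRk (Uk k) h hinv). auto.
Qed.
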